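(* Let $V$ be a real vector space of dimension $n$ and $1\le k\le n-1$. Let $E\subseteq V$ be a subspace, $A\subseteq \mathrm{Ann}(E)$ a subspace, and $\varepsilon: E\to \wedge^k V^*/A$ a linear map which is $E$-skew. Then $$L(E,A,\varepsilon)=\{X+\alpha \mid X\in E,\ \alpha + A=\varepsilon(X)\}\subseteq V\oplus \wedge^kV^*$$ is isotropic. Conversely, every isotropic subspace $L\subseteq V\oplus\wedge^kV^*$ is of the form $L(E,A_L,\varepsilon)$ with $E=\mathrm{pr}_1(L)$, $A_L=L\cap\wedge^kV^*$, and $\varepsilon:E\to\wedge^kV^*/A_L$ defined by $\varepsilon(X)=\alpha+A_L$ whenever $X+\alpha\in L$ (this $\varepsilon$ being well defined, linear and $E$-skew).
   Context: On $V\oplus\wedge^kV^*$ consider the symmetric $\wedge^{k-1}V^*$-valued pairing $\langle X+\alpha,Y+\beta\rangle=i_X\beta+i_Y\alpha$. For a subspace $L$, $L^\perp$ is its orthogonal with respect to this pairing, and $L$ is isotropic if $L\subseteq L^\perp$. $\mathrm{pr}_1,\mathrm{pr}_2$ denote the projections to $V$ and $\wedge^kV^*$. For $E\subseteq V$, $\mathrm{Ann}(E)=\{\alpha\in\wedge^kV^*\mid i_Y\alpha=0\ \forall Y\in E\}$. For $A\subseteq\mathrm{Ann}(E)$, let $\iota_E:\wedge^kV^*/A\to E^*\otimes\wedge^{k-1}V^*$, $\alpha+A\mapsto (X\mapsto i_X\alpha)$. A linear map $\varepsilon:E\to\wedge^kV^*/A$ is called $E$-skew if $\iota_E\circ\varepsilon\in\wedge^2E^*\otimes\wedge^{k-1}V^*$,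 i.e. $i_Y(\varepsilon(X))=-i_X(\varepsilon(Y))$ for all $X,Y\in E$. *)

From mathcomp Require Import all_boot all_algebra.
From mathcomp Require Export reals.
Set Implicit Arguments. Unset Strict Implicit. Unset Printing Implicit Defensive.
Import GRing.Theory.
Local Open Scope ring_scope.

Definition Vsp (R : realType) (n : nat) := 'rV[R]_n.

(* Exterior forms on V, in coordinates: a form is the family of its coefficients
   alpha(J) on the basis e^J = e^{j_1} /\ ... /\ e^{j_m} (j_1 < ... < j_m),
   indexed by all subsets J of 'I_n. *)
Definition kform (R : realType) (n : nat) := {ffun {set 'I_n} -> R^o}.

Definition isform (R : realType) (n k : nat) (a : kform R n) : Prop :=
  forall J : {set 'I_n}, #|J| != k -> a J = 0.

(* interior product i_X alpha : for alpha = e^J, J = {j_1<...<j_k},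
   i_X e^J = sum_m (-1)^(m-1) X_{j_m} e^{J \ j_m}. *)
Definition contract (R : realType) (n : nat) (X : Vsp R n) (a : kform R n) : kform R n :=
  [ffun S : {set 'I_n} =>
     \sum_(j < n | j \notin S) X 0 j * (-1) ^+ #|[set i in S | (i < j)%N]| * a (j |: S)].

(* The ambient space V (+) wedge^k V^* is modelled inside Vsp * form; a subset
   lives in V (+) wedge^k V^* when all second components are k-forms. *)
Definition amb (R : realType) (n : nat) := (Vsp R n * kform R n)%type.

Definition in_amb (R : realType) (n k : nat) (L : amb R n -> Prop) : Prop :=
  forall u, L u -> isform k u.2.

Definition subspace (R : realType) (T : lmodType R) (S : T -> Prop) : Prop :=
  S 0 /\ forall (a : R) (x y : T), S x -> S y -> S (a *: x + y).

Definition pairing (R : realType) (n : nat) (u v : amb R n) : kform R n :=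
  contract u.1 v.2 + contract v.1 u.2.

Definition perp (R : realType) (n k : nat) (L : amb R n -> Prop) : amb R n -> Prop :=
  fun u => isform k u.2 /\ forall v, L v -> pairing u v = 0.

Definition isotropic (R : realType) (n k : nat) (L : amb R n -> Prop) : Prop :=
  forall u, L u -> perp k L u.

Definition pr1 (R : realType) (n : nat) (L : amb R n -> Prop) : Vsp R n -> Prop :=
  fun X => exists a, L (X, a).

Definition Acap (R : realType) (n : nat) (L : amb R n -> Prop) : kform R n -> Prop :=
  fun a => L (0, a).

Definition Ann (R : realType) (n k : nat) (E : Vsp R n -> Prop) : kform R n -> Prop :=
  fun a => isform k a /\ forall Y, E Y -> contract Y a = 0.

(* A linear map eps : E -> wedge^k V^*/A is represented by a function
   eps : V -> form (its values on E being representatives of the cosets):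
   values on E are k-forms, and X |-> eps X + A is linear on E. *)
Definition qlinear (R : realType) (n k : nat) (E : Vsp R n -> Prop)
    (A : kform R n -> Prop) (eps : Vsp R n -> kform R n) : Prop :=
  (forall X, E X -> isform k (eps X)) /\
  forall (c : R) X Y, E X -> E Y -> A (eps (c *: X + Y) - (c *: eps X + eps Y)).

(* E-skew: i_Y (eps X) = - i_X (eps Y) for X, Y in E (independent of the
   representatives since A is contained in Ann(E)). *)
Definition Eskew (R : realType) (n : nat) (E : Vsp R n -> Prop)
    (eps : Vsp R n -> kform R n) : Prop :=
  forall X Y, E X -> E Y -> contract Y (eps X) = - contract X (eps Y).

Definition Lset (R : realType) (n : nat) (E : Vsp R n -> Prop)
    (A : kform R n -> Prop) (eps : Vsp R n -> kform R n) : amb R n -> Prop :=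
  fun u => E u.1 /\ A (u.2 - eps u.1).

(* A vector X + alpha of L(E, A, eps) differs from X + eps X by an element of
   A, which i_Y kills for Y in E; so the pairing of two such vectors reduces to
   i_X (eps Y) + i_Y (eps X), which vanishes by E-skewness.  Conversely, for an
   isotropic subspace L, two lifts X + a and X + b of the same X differ by
   0 + (a - b) in L, which gives a well defined eps; pairing 0 + a with an
   element of L shows L /\ wedge^k V^* is in Ann(pr1 L), and pairing two lifts
   X + eps X and Y + eps Y is exactly E-skewness. *)
From mathcomp Require Import all_boot all_algebra.
From mathcomp Require Import boolp.
Set Implicit Arguments. Unset Strict Implicit. Unset Printing Implicit Defensive.
Import GRing.Theory.
Local Open Scope ring_scope.

Section Forms.
Variables (R : realType) (n : nat).

Lemma contractDr (X : Vsp R n) (a b : kform R n) :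
  contract X (a + b) = contract X a + contract X b.
Proof.
apply/ffunP => S; rewrite !ffunE -big_split /=.
by apply: eq_bigr => j _; rewrite ffunE mulrDr.
Qed.

Lemma contract0l (a : kform R n) : contract 0 a = 0.
Proof. by apply/ffunP => S; rewrite !ffunE big1 // => j _; rewrite mxE !mul0r. Qed.

Lemma isformD k (a b : kform R n) : isform k a -> isform k b -> isform k (a + b).
Proof. by move=> Ha Hb J HJ; rewrite ffunE Ha // Hb // addr0. Qed.

Lemma amb_combE (c : R) (u v : amb R n) :
  c *: u + v = (c *: u.1 + v.1, c *: u.2 + v.2).
Proof. by case: u; case: v. Qed.

End Forms.

Section IsotropicLset.
Variables (R : realType) (n k : nat).
Variables (E : Vsp R n -> Prop) (A : kform R n -> Prop) (eps : Vsp R n -> kform R n).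
Hypothesis A_Ann : forall a, A a -> Ann k E a.
Hypothesis eps_form : forall X, E X -> isform k (eps X).
Hypothesis eps_skew : Eskew E eps.

Lemma Lset_form u : Lset E A eps u -> isform k u.2.
Proof.
case: u => X a [/= EX AXa] /=; rewrite -(subrK (eps X) a).
by apply: isformD; [exact: (A_Ann AXa).1 | exact: eps_form].
Qed.

Lemma pairing_Lset u v : Lset E A eps u -> Lset E A eps v -> pairing u v = 0.
Proof.
case: u v => [X a] [Y b] [/= EX AXa] [/= EY AYb].
rewrite /pairing /= -(subrK (eps Y) b) -(subrK (eps X) a).
rewrite [contract X _]contractDr [contract Y _]contractDr.
rewrite ((A_Ann AXa).2 _ EY) ((A_Ann AYb).2 _ EX) !add0r.
by rewrite (eps_skew EX EY) subrr.
Qed.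

Lemma Lset_isotropic : isotropic k (Lset E A eps).
Proof. by move=> u Lu; split; [exact: Lset_form | move=> v; exact: pairing_Lset]. Qed.

End IsotropicLset.

Definition section_of (R : realType) (n : nat) (L : amb R n -> Prop)
    (eps : Vsp R n -> kform R n) : Prop :=
  forall X, pr1 L X -> L (X, eps X).

Section IsotropicSubspace.
Variables (R : realType) (n k : nat) (L : amb R n -> Prop).
Hypothesis L_subspace : subspace L.
Hypothesis L_form : in_amb k L.
Hypothesis L_isotropic : isotropic k L.

Let L_comb c u v : L u -> L v -> L (c *: u + v) := L_subspace.2 c u v.

Lemma pr1_subspace : subspace (pr1 L).
Proof.
split; first by exists 0; apply: L_subspace.1.
move=> c X Y [a La] [b Lb]; exists (c *: a + b).
by have := L_comb c La Lb; rewrite amb_combE.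
Qed.

Lemma Acap_subspace : subspace (Acap L).
Proof.
split=> [|c a b La Lb]; first exact: L_subspace.1.
by have := L_comb c La Lb; rewrite amb_combE /= scaler0 addr0.
Qed.

Lemma Acap_fibre X a b : L (X, a) -> L (X, b) -> Acap L (a - b).
Proof.
by move=> La Lb; have := L_comb (-1) Lb La; rewrite amb_combE /= !scaleN1r addNr addrC.
Qed.

Lemma section_exists : exists eps, section_of L eps.
Proof.
suff /choice[eps eps_section] : forall X, exists e, pr1 L X -> L (X, e) by exists eps.
move=> X; case: (pselect (pr1 L X)) => [[a La] | nLX]; [by exists a | by exists 0].
Qed.

Variable eps : Vsp R n -> kform R n.
Hypothesis eps_section : section_of L eps.

Lemma section_qlinear : qlinear k (pr1 L) (Acap L) eps.
Proof.
split=> [X /eps_section /L_form // | c X Y EX EY].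
apply: (@Acap_fibre (c *: X + Y)); first exact/eps_section/pr1_subspace.2.
by have := L_comb c (eps_section EX) (eps_section EY); rewrite amb_combE.
Qed.

Lemma Lset_section u : L u <-> Lset (pr1 L) (Acap L) eps u.
Proof.
case: u => X a; split=> [La | [/= EX Aa]].
  have EX : pr1 L X by exists a.
  by split=> //=; apply: Acap_fibre La (eps_section EX).
have := L_comb 1 Aa (eps_section EX).
by rewrite amb_combE /= !scale1r add0r subrK.
Qed.

Lemma Acap_Ann a : Acap L a -> Ann k (pr1 L) a.
Proof.
move=> La; split; first exact: L_form La.
move=> Y [b Lb]; have := (L_isotropic La).2 _ Lb.
by rewrite /pairing /= contract0l add0r.
Qed.

Lemma section_skew : Eskew (pr1 L) eps.
Proof.
move=> X Y EX EY; apply/eqP; rewrite -addr_eq0 addrC.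
exact/eqP/((L_isotropic (eps_section EX)).2 _ (eps_section EY)).
Qed.

End IsotropicSubspace.

Theorem proposition3p2 (R : realType) (n k : nat) :
  (1 <= k <= n - 1)%N ->
  (forall (E : Vsp R n -> Prop) (A : kform R n -> Prop) (eps : Vsp R n -> kform R n),
      subspace E -> subspace A -> (forall a, A a -> Ann k E a) ->
      qlinear k E A eps -> Eskew E eps ->
      isotropic k (Lset E A eps))
  /\
  (forall L : amb R n -> Prop,
      subspace L -> in_amb k L -> isotropic k L ->
      [/\ subspace (pr1 L) /\ subspace (Acap L),
          (forall a, Acap L a -> Ann k (pr1 L) a),
          (* eps(X) = alpha + A_L whenever X + alpha in L is well defined *)
          (forall X a b, L (X, a) -> L (X, b) -> Acap L (a - b)),
          (* a representative of eps exists *)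
          (exists eps : Vsp R n -> kform R n, forall X, pr1 L X -> L (X, eps X)) &
          (* any representative is linear, E-skew, and L = L(E, A_L, eps) *)
          forall eps : Vsp R n -> kform R n,
            (forall X, pr1 L X -> L (X, eps X)) ->
            [/\ qlinear k (pr1 L) (Acap L) eps, Eskew (pr1 L) eps &
                forall u, L u <-> Lset (pr1 L) (Acap L) eps u]]).
Proof.
move=> _; split=> [E A eps _ _ A_Ann [eps_form _] eps_skew | L sL L_form isoL].
  exact: Lset_isotropic.
split.
- by split; [exact: pr1_subspace | exact: Acap_subspace].
- by move=> a; apply: Acap_Ann.
- by move=> X a b; apply: Acap_fibre.
- exact: section_exists.
- move=> eps eps_section.
  split.
  + exact: section_qlinear.
  + exact: (section_skew isoL eps_section).
  + exact: Lset_section.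
Qed.
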